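(* Let $N>0$, $R=\mathbb{Q}[x_1,x_2,y_1,y_2]$, and let $X_\circ$, $X_\bullet$, $\pi_\circ,\pi_\bullet$ and $a_2$ be as in the context. Define the $R$-linear map $\chi_0:X_\circ\to X_\bullet\{-2\}$ by $\chi_0(1)=\frac12(x_1+y_1-x_2-y_2)\cdot1+a_2\,\theta_1\theta_2$, $\chi_0(\theta_1)=-\theta_2+\frac12(x_1+y_1)\theta_1$, $\chi_0(\theta_2)=\theta_2-\frac12(x_2+y_2)\theta_1$, $\chi_0(\theta_1\theta_2)=\theta_1\theta_2$. Then $\chi_0$ is a morphism of graded matrix factorisations and $\pi_\bullet\circ\chi_0=m\circ\pi_\circ$, where $m:R/(y_1-x_1,y_2-x_2)\to R/(y_1+y_2-x_1-x_2,\,y_1y_2-x_1x_2)\{-2\}$ is multiplication by $\frac12(x_1+y_1-x_2-y_2)$.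
   Context: Variables have degree $2$; $M\{m\}$ denotes $M$ with grading shifted up by $m$ ($M\{m\}_i=M_{i-m}$). $t_i=y_i-x_i$, $w_i=(y_i^{N+1}-x_i^{N+1})/(y_i-x_i)$, $s_1=y_1+y_2-x_1-x_2$, $s_2=y_1y_2-x_1x_2$; $u_1,u_2$ homogeneous with $y_1^{N+1}+y_2^{N+1}-x_1^{N+1}-x_2^{N+1}=u_1s_1+u_2s_2$ and invariant under interchanging $(x_1,x_2)$ with $(y_1,y_2)$; $a_2=\frac12u_2+(u_1+y_1u_2-w_2)/(x_1-y_1)$ (a polynomial). For homogeneous sequences $\boldsymbol a,\boldsymbol b$ with $\deg a_i+\deg b_i=2c$ ($c=N+1$), $\{\boldsymbol a,\boldsymbol b\}$ is the exterior algebra over $R$ on $\theta_1,\theta_2$ ($\mathbb{Z}_2$-degree $1$, internal degree $\deg a_i-c$) with differential $(\sum b_i\theta_i^* )\lrcorner(-)+(\sum a_i\theta_i)\wedge(-)$. $X_\circ=\{(w_1,w_2),(t_1,t_2)\}$, $X_\bullet=\{(u_1,u_2),(s_1,s_2)\}$. $\pi_\circ:X_\circ\to R/(t_1,t_2)$ and $\pi_\bullet:X_\bullet\to R/(s_1,s_2)$ are the projections onto the exterior degree $0$ part $R$ followed by the quotient map. *)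

From HB Require Import structures.
From mathcomp Require Import all_boot all_order all_algebra.
From mathcomp Require Import mpoly.
Set Implicit Arguments. Unset Strict Implicit. Unset Printing Implicit Defensive.
Import Order.TTheory GRing.Theory Num.Theory.
Local Open Scope ring_scope.

Notation R := {mpoly rat[4]}.
Definition var (k : nat) : R := 'X_(inord k).
Definition x1 : R := var 0.
Definition x2 : R := var 1.
Definition y1 : R := var 2.
Definition y2 : R := var 3.
Definition xs (i : 'I_2) : R := if i == ord0 then x1 else x2.
Definition ys (i : 'I_2) : R := if i == ord0 then y1 else y2.
Definition halfR : R := (2^-1 : rat)%:MP.

(* t_i = y_i - x_i,  w_i = (y_i^(N+1) - x_i^(N+1))/(y_i - x_i) = sum_k y_i^k x_i^(N-k) *)
Definition tt (i : 'I_2) : R := ys i - xs i.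
Definition ww (N : nat) (i : 'I_2) : R :=
  \sum_(k < N.+1) ys i ^+ k * xs i ^+ (N - k).
Definition s1 : R := y1 + y2 - x1 - x2.
Definition s2 : R := y1 * y2 - x1 * x2.

Definition swapxy (p : R) : R := p \mPo [tuple y1; y2; x1; x2].

(* q-homogeneity (variables have degree 2; degree may be any integer;
   the zero polynomial is homogeneous of every degree) *)
Definition qhomog (p : R) (k : int) : Prop :=
  p = 0 \/ exists d : nat, k = (2 * d)%N%:Z /\ p \is d.-homog.

(* Koszul matrix factorisation {a,b} over R with two generators:
   data a_i, b_i, the degrees deg a_i, and c. *)
Record kmf := KMF {
  mf_a : 'I_2 -> R; mf_b : 'I_2 -> R; mf_dega : 'I_2 -> int; mf_c : int }.

(* elements of the exterior algebra over R on theta_0, theta_1: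
   coefficient of theta_S (S increasing) *)
Definition ext := {ffun {set 'I_2} -> R}.

Definition tsign (i : 'I_2) (S : {set 'I_2}) : R :=
  (-1) ^+ #|[set j in S | (j < i)%N]|.
Definition wedge (i : 'I_2) (f : ext) : ext :=
  [ffun S : {set 'I_2} => if i \in S then tsign i (S :\ i) * f (S :\ i) else 0].
Definition contr (i : 'I_2) (f : ext) : ext :=
  [ffun S : {set 'I_2} => if i \in S then 0 else tsign i S * f (i |: S)].
Definition kd (X : kmf) (f : ext) : ext :=
  [ffun S : {set 'I_2} => \sum_(i < 2) (mf_b X i * contr i f S + mf_a X i * wedge i f S)].

Definition kdeg (X : kmf) (S : {set 'I_2}) : int :=
  \sum_(i in S) (mf_c X - mf_dega X i).
(* f is homogeneous of degree j in X{m} (X{m}_j = X_{j-m}) *)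
Definition homog_in (X : kmf) (m : int) (f : ext) (j : int) : Prop :=
  forall S : {set 'I_2}, qhomog (f S) (j - m - kdeg X S).
Definition parity_in (f : ext) (e : bool) : Prop :=
  forall S : {set 'I_2}, odd #|S| != e -> f S = 0.

Definition mf_morphism (X Y : kmf) (m : int) (chi : ext -> ext) : Prop :=
  [/\ forall f g, chi (f + g) = chi f + chi g,
      forall (r : R) (f : ext), chi [ffun S : {set 'I_2} => r * f S] = [ffun S : {set 'I_2} => r * chi f S],
      forall f e, parity_in f e -> parity_in (chi f) e,
      forall f j, homog_in X 0 f j -> homog_in Y m (chi f) j
    & forall f, chi (kd X f) = kd Y (chi f)].

Definition Xcirc (N : nat) : kmf :=
  KMF (ww N) tt (fun _ => (2 * N)%N%:Z) (N.+1)%:Z.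
Definition Xbullet (N : nat) (u1 u2 : R) : kmf :=
  KMF (fun i => if i == ord0 then u1 else u2)
      (fun i => if i == ord0 then s1 else s2)
      (fun i => if i == ord0 then (2 * N)%N%:Z else (2 * N)%N%:Z - 2)
      (N.+1)%:Z.

Definition ebasis (S : {set 'I_2}) : ext := [ffun T : {set 'I_2} => (T == S)%:R].
Definition sc (r : R) (f : ext) : ext := [ffun S : {set 'I_2} => r * f S].
Definition th1 : {set 'I_2} := [set ord0].
Definition th2 : {set 'I_2} := [set ord_max].
Definition th12 : {set 'I_2} := [set: 'I_2].

Definition mfactor : R := halfR * (x1 + y1 - x2 - y2).

Definition chi0_img (a2 : R) (S : {set 'I_2}) : ext :=
  if S == set0 then sc mfactor (ebasis set0) + sc a2 (ebasis th12)
  else if S == th1 then - ebasis th2 + sc (halfR * (x1 + y1)) (ebasis th1)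
  else if S == th2 then ebasis th2 - sc (halfR * (x2 + y2)) (ebasis th1)
  else ebasis th12.

Definition chi0 (a2 : R) (f : ext) : ext :=
  \sum_(S : {set 'I_2}) sc (f S) (chi0_img a2 S).

Definition in_ideal2 (g1 g2 p : R) : Prop :=
  exists r1 r2 : R, p = r1 * g1 + r2 * g2.

From HB Require Import structures.
From mathcomp Require Import all_boot all_order all_algebra.
From mathcomp Require Import mpoly.
From mathcomp Require Import ring zify.
Set Implicit Arguments. Unset Strict Implicit. Unset Printing Implicit Defensive.
Import Order.TTheory GRing.Theory Num.Theory.
Local Open Scope ring_scope.

(* Since chi_0 is given by an explicit 4x4 matrix, everything reduces to
   polynomial identities in R.  Homogeneity needs a_2 to be homogeneous of
   degree N-1, which holds because (x1 - y1)(a_2 - u_2/2) is homogeneous of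
   degree N and R is a domain.  Commutation with the differentials amounts to
   four identities between w_1, w_2, u_1, u_2 and a_2; multiplied by the non
   zero-divisor y1 - x1 they become combinations of the defining relations of
   (u_1, u_2) and of a_2. *)

Lemma ord2_cases (i : 'I_2) : i = ord0 \/ i = ord_max.
Proof. by case: i => [[|[|//]]] H; [left|right]; apply: val_inj. Qed.

Lemma eq_setI2 (S T : {set 'I_2}) :
  (ord0 \in S) = (ord0 \in T) -> (ord_max \in S) = (ord_max \in T) -> S = T.
Proof. by move=> h0 h1; apply/setP => i; case: (ord2_cases i) => ->. Qed.

Lemma eq_setI2E (S T : {set 'I_2}) :
  (S == T) = ((ord0 \in S) == (ord0 \in T)) && ((ord_max \in S) == (ord_max \in T)).
Proof.
apply/eqP/andP => [->|[/eqP h0 /eqP h1]]; first by rewrite !eqxx.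
exact: eq_setI2.
Qed.

Lemma setI2_cases (S : {set 'I_2}) : S = set0 \/ S = th1 \/ S = th2 \/ S = th12.
Proof.
case E0: (ord0 \in S); case E1: (ord_max \in S).
- by right; right; right; apply: eq_setI2; rewrite !inE ?E0 ?E1.
- by right; left; apply: eq_setI2; rewrite !inE ?E0 ?E1.
- by right; right; left; apply: eq_setI2; rewrite !inE ?E0 ?E1.
- by left; apply: eq_setI2; rewrite !inE ?E0 ?E1.
Qed.

Lemma theta_setE :
  ((th1 :\ ord0 = set0) * (th2 :\ ord_max = set0) * (th12 :\ ord0 = th2)
   * (th12 :\ ord_max = th1) * (ord0 |: set0 = th1) * (ord_max |: set0 = th2)
   * (ord0 |: th2 = th12) * (ord_max |: th1 = th12))%type.
Proof. by do !split; apply: eq_setI2; rewrite !inE. Qed.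

Lemma card_setI2 (S : {set 'I_2}) : #|S| = ((ord0 \in S) + (ord_max \in S))%N.
Proof.
by case: (setI2_cases S) => [->|[->|[->|->]]];
  rewrite ?cards0 ?cards1 ?cardsT ?card_ord ?inE.
Qed.

Lemma sum_I2 (V : nmodType) (F : 'I_2 -> V) : \sum_(i < 2) F i = F ord0 + F ord_max.
Proof.
rewrite big_ord_recl big_ord_recl big_ord0 addr0; congr (_ + F _).
exact: val_inj.
Qed.

Lemma sum_setI2 (V : nmodType) (F : {set 'I_2} -> V) :
  \sum_(S : {set 'I_2}) F S = F set0 + F th1 + F th2 + F th12.
Proof.
rewrite (bigD1 set0) //= (bigD1 th1) ?eq_setI2E ?inE //=.
rewrite (bigD1 th2) ?eq_setI2E ?inE //= (bigD1 th12) ?eq_setI2E ?inE //=.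
rewrite big1 ?addr0 ?addrA // => S.
by case: (setI2_cases S) => [->|[->|[->|->]]]; rewrite !eq_setI2E !inE.
Qed.

Lemma tsign_ord0 S : tsign ord0 S = 1.
Proof. by rewrite /tsign card_setI2 !inE /= !andbF. Qed.

Lemma tsign_ordmax S : tsign ord_max S = if ord0 \in S then -1 else 1.
Proof. by rewrite /tsign card_setI2 !inE /= !andbF !andbT; case: (ord0 \in S). Qed.

Ltac simpl_theta :=
  rewrite ?theta_setE ?tsign_ord0 ?tsign_ordmax ?eq_setI2E ?inE /=.

Section KoszulCoordinates.
Variables (X : kmf) (f : ext).
Local Notation a := (mf_a X).
Local Notation b := (mf_b X).

Lemma kd_set0 : kd X f set0 = b ord0 * f th1 + b ord_max * f th2.
Proof. rewrite /kd ffunE sum_I2 /contr /wedge !ffunE; simpl_theta; ring. Qed.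

Lemma kd_th1 : kd X f th1 = - b ord_max * f th12 + a ord0 * f set0.
Proof. rewrite /kd ffunE sum_I2 /contr /wedge !ffunE; simpl_theta; ring. Qed.

Lemma kd_th2 : kd X f th2 = b ord0 * f th12 + a ord_max * f set0.
Proof. rewrite /kd ffunE sum_I2 /contr /wedge !ffunE; simpl_theta; ring. Qed.

Lemma kd_th12 : kd X f th12 = a ord0 * f th2 - a ord_max * f th1.
Proof. rewrite /kd ffunE sum_I2 /contr /wedge !ffunE; simpl_theta; ring. Qed.

End KoszulCoordinates.

Section Chi0Coordinates.
Variables (a2 : R) (f : ext).

Lemma chi0E S : chi0 a2 f S = f set0 * chi0_img a2 set0 S + f th1 * chi0_img a2 th1 S
  + f th2 * chi0_img a2 th2 S + f th12 * chi0_img a2 th12 S.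
Proof. by rewrite /chi0 sum_ffunE sum_setI2 /sc !ffunE. Qed.

Ltac chi0_coord := rewrite chi0E /chi0_img /sc /ebasis; simpl_theta;
  rewrite !ffunE; simpl_theta; ring.

Lemma chi0_set0 : chi0 a2 f set0 = f set0 * mfactor.
Proof. chi0_coord. Qed.

Lemma chi0_th1 :
  chi0 a2 f th1 = f th1 * (halfR * (x1 + y1)) - f th2 * (halfR * (x2 + y2)).
Proof. chi0_coord. Qed.

Lemma chi0_th2 : chi0 a2 f th2 = - f th1 + f th2.
Proof. chi0_coord. Qed.

Lemma chi0_th12 : chi0 a2 f th12 = f set0 * a2 + f th12.
Proof. chi0_coord. Qed.

End Chi0Coordinates.

Definition chi0E_coords := (chi0_set0, chi0_th1, chi0_th2, chi0_th12).

Lemma pihomogMl (n : nat) (K : nzRingType) (q p : {mpoly K[n]}) e b :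
  q \is e.-homog -> q * pihomog mdeg b p = pihomog mdeg (e + b) (q * p).
Proof.
move=> hq; set k := maxn (mmeasure mdeg p) b.+1.
rewrite {2}(@pihomog_partitionE _ _ mdeg k p) ?leq_maxl //.
rewrite [X in _ = pihomog _ _ X]mulr_sumr.
rewrite (big_morph (pihomog mdeg (e + b)) (pihomogD _ _) (pihomog0 _ _ _)).
have bk : (b < k)%N by rewrite leq_maxr.
rewrite (bigD1 (Ordinal bk)) //= big1 ?addr0.
  by rewrite [RHS]pihomog_dE //; apply: dhomogM hq (pihomogP mdeg b p).
move=> d /eqP hd; apply: (pihomog_ne0 (d := (e + d)%N)).
  by apply/eqP => h; apply: hd; apply: val_inj => /=; lia.
exact: dhomogM hq (pihomogP mdeg _ p).
Qed.

Lemma dhomogMlK (n : nat) (K : idomainType) (q p : {mpoly K[n]}) e d :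
  q != 0 -> q \is e.-homog -> q * p \is (e + d).-homog -> p \is d.-homog.
Proof.
move=> nq hq hqp.
have pi_ne : forall b, b != d -> pihomog mdeg b p = 0.
  move=> b hb; apply/eqP; rewrite -(mulIr_eq0 _ (mulIf nq)) mulrC (pihomogMl p b hq).
  by rewrite (pihomog_ne0 (d := (e + d)%N)) // eqn_add2l eq_sym.
set k := maxn (mmeasure mdeg p) d.+1.
rewrite (@pihomog_partitionE _ _ mdeg k p) ?leq_maxl //.
have dk : (d < k)%N by rewrite leq_maxr.
rewrite (bigD1 (Ordinal dk)) //= big1 ?addr0; first exact: pihomogP.
by move=> b hb; apply: pi_ne; apply: contra hb => /eqP hb; apply/eqP/val_inj.
Qed.

Lemma var_homog k : var k \is 1.-homog.
Proof. by rewrite /var dhomogX /= mdeg1. Qed.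

Lemma mpolyC_homog (c : rat) : (c%:MP : R) \is 0.-homog.
Proof. by rewrite -[c%:MP]mulr1 mul_mpolyC; apply/dhomogZ/dhomog1. Qed.

Lemma ww_homog N i : ww N i \is N.-homog.
Proof.
apply: rpred_sum => k _.
have hy : ys i \is 1.-homog by rewrite /ys; case: (i == ord0); exact: var_homog.
have hx : xs i \is 1.-homog by rewrite /xs; case: (i == ord0); exact: var_homog.
have := dhomogM (dhomogMn k hy) (dhomogMn (N - k) hx).
by have -> : (1 * k + 1 * (N - k))%N = N by have := ltn_ord k; lia.
Qed.

Lemma qhomog_eq p k l : qhomog p k -> k = l -> qhomog p l.
Proof. by move=> hp <-. Qed.

Lemma qhomog_dhomog p d : p \is d.-homog -> qhomog p (2 * d)%N.
Proof. by right; exists d. Qed.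

Lemma qhomogD p q k : qhomog p k -> qhomog q k -> qhomog (p + q) k.
Proof.
case=> [->|[d [-> hp]]]; first by rewrite add0r.
case=> [->|[e [/eqP he hq]]]; first by rewrite addr0; right; exists d.
right; exists d; split => //; apply: rpredD => //.
by have -> : d = e by move: he; rewrite eqz_nat; lia.
Qed.

Lemma qhomogN p k : qhomog p k -> qhomog (- p) k.
Proof.
case=> [->|[d [-> hp]]]; first by rewrite oppr0; left.
by right; exists d; rewrite rpredN.
Qed.

Lemma qhomogM p q k l : qhomog p k -> qhomog q l -> qhomog (p * q) (k + l).
Proof.
case=> [->|[d [-> hp]]]; first by rewrite mul0r; left.
case=> [->|[e [-> hq]]]; first by rewrite mulr0; left.
right; exists (d + e)%N; split; last exact: dhomogM.
by apply/eqP; rewrite -PoszD eqz_nat; lia.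
Qed.

Lemma qhomog_var k : qhomog (var k) 2.
Proof. exact: qhomog_dhomog (var_homog k). Qed.

Lemma qhomog_half p : qhomog p 2 -> qhomog (halfR * p) 2.
Proof. by move=> hp; apply: qhomog_eq (qhomogM (qhomog_dhomog (mpolyC_homog _)) hp) _. Qed.

Lemma qhomog_half_add k l : qhomog (halfR * (var k + var l)) 2.
Proof. by apply/qhomog_half/qhomogD; exact: qhomog_var. Qed.

Lemma qhomog_mfactor : qhomog mfactor 2.
Proof.
apply/qhomog_half/qhomogD/qhomogN/qhomog_var.
apply/qhomogD/qhomogN/qhomog_var.
by apply: qhomogD; exact: qhomog_var.
Qed.

Lemma kdeg_set0 X : kdeg X set0 = 0.
Proof. by rewrite /kdeg big_set0. Qed.

Lemma kdeg_th1 X : kdeg X th1 = mf_c X - mf_dega X ord0.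
Proof. by rewrite /kdeg big_set1. Qed.

Lemma kdeg_th2 X : kdeg X th2 = mf_c X - mf_dega X ord_max.
Proof. by rewrite /kdeg big_set1. Qed.

Lemma kdeg_th12 X :
  kdeg X th12 = (mf_c X - mf_dega X ord0) + (mf_c X - mf_dega X ord_max).
Proof. by rewrite /kdeg (eq_bigl (fun _ => true)) ?sum_I2 // => i; rewrite in_setT. Qed.

Definition kdegE := (kdeg_set0, kdeg_th1, kdeg_th2, kdeg_th12).

Lemma mul2_halfR : 2 * halfR = 1.
Proof.
rewrite /halfR -[2 : R](rmorph_nat (@mpolyC 4 rat)) -rmorphM /=.
by rewrite mulfV.
Qed.

Lemma y1_sub_x1_neq0 : y1 - x1 != 0.
Proof.
apply/negP => /eqP /(congr1 (mcoeff U_(inord 2))).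
rewrite mcoeffB /y1 /x1 /var !mcoeffXU mcoeff0.
have -> : (inord 0 == inord 2 :> 'I_4) = false.
  by apply/negP => /eqP /(congr1 val); rewrite /= !inordK.
by rewrite eqxx subr0 => /eqP; rewrite oner_eq0.
Qed.

Lemma tt_mul_ww N i : tt i * ww N i = ys i ^+ N.+1 - xs i ^+ N.+1.
Proof.
rewrite /tt /ww -[ys i ^+ _ - _]opprB subrXX.
under eq_bigr do rewrite mulrC.
ring.
Qed.

(* Identities are proved by exhibiting the difference of the two sides as an
   explicit combination of known relations; these include 2 * halfR - 1 = 0,
   which [ring] cannot see on its own. *)
Lemma eq_by_comb (L L' D : R) : L - L' = D -> D = 0 -> L = L'.
Proof. by move=> h h0; apply/eqP; rewrite -subr_eq0 h h0. Qed.

Lemma mulIf_y1_sub_x1 (p : R) : (y1 - x1) * p = 0 -> p = 0.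
Proof. by move=> h; apply/eqP; rewrite -(mulIr_eq0 _ (mulIf y1_sub_x1_neq0)) mulrC h. Qed.

Section ChainIdentities.
Variables (n : nat) (u1 u2 a2 : R).
Hypothesis hsum :
  y1 ^+ n.+2 + y2 ^+ n.+2 - x1 ^+ n.+2 - x2 ^+ n.+2 = u1 * s1 + u2 * s2.
Hypothesis ha : (x1 - y1) * (a2 - halfR * u2) = u1 + y1 * u2 - ww n.+1 ord_max.

Local Notation w1 := (ww n.+1 ord0).
Local Notation w2 := (ww n.+1 ord_max).
Local Notation h := halfR.

Lemma ww_koszul : (y1 - x1) * w1 + (y2 - x2) * w2 = u1 * s1 + u2 * s2.
Proof.
have e1 := tt_mul_ww n.+1 ord0; have e2 := tt_mul_ww n.+1 ord_max.
rewrite /tt /ys /xs /= in e1 e2.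
by rewrite e1 e2 -hsum; ring.
Qed.

Lemma chain_rel_th12_1 : (y1 - x1) * a2 - w2 + u1 + u2 * (h * (x1 + y1)) = 0.
Proof.
apply: (eq_by_comb (D := - ((x1 - y1) * (a2 - h * u2) - (u1 + y1 * u2 - w2))
  + y1 * u2 * (2 * h - 1))); first ring.
by rewrite ha subrr mul2_halfR subrr; ring.
Qed.

Lemma chain_rel_th2 : w2 - w1 - s1 * a2 - u2 * mfactor = 0.
Proof.
apply: mulIf_y1_sub_x1.
apply: (eq_by_comb (D := s1 * ((x1 - y1) * (a2 - h * u2) - (u1 + y1 * u2 - w2))
  - ((y1 - x1) * w1 + (y2 - x2) * w2 - (u1 * s1 + u2 * s2))
  + (u2 * s2 - s1 * y1 * u2) * (2 * h - 1))).
  by rewrite /mfactor /s1 /s2; ring.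
by rewrite ha ww_koszul !subrr mul2_halfR subrr; ring.
Qed.

Lemma chain_rel_th1 :
  w1 * (h * (x1 + y1)) - w2 * (h * (x2 + y2)) + s2 * a2 - u1 * mfactor = 0.
Proof.
apply: mulIf_y1_sub_x1.
apply: (eq_by_comb (D := - s2 * ((x1 - y1) * (a2 - h * u2) - (u1 + y1 * u2 - w2))
  + h * (x1 + y1) * ((y1 - x1) * w1 + (y2 - x2) * w2 - (u1 * s1 + u2 * s2))
  + (s2 * u1 - w2 * s2 + s2 * y1 * u2) * (2 * h - 1))).
  by rewrite /mfactor /s1 /s2; ring.
by rewrite ha ww_koszul !subrr mul2_halfR subrr; ring.
Qed.

Lemma chain_rel_th12_2 : (y2 - x2) * a2 + w1 - u1 - u2 * (h * (x2 + y2)) = 0.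
Proof.
apply: (eq_by_comb (D := - (w2 - w1 - s1 * a2 - u2 * mfactor)
  - ((y1 - x1) * a2 - w2 + u1 + u2 * (h * (x1 + y1))))).
  by rewrite /mfactor /s1; ring.
by rewrite chain_rel_th2 chain_rel_th12_1; ring.
Qed.

Lemma chi0_kd f : chi0 a2 (kd (Xcirc n.+1) f) = kd (Xbullet n.+1 u1 u2) (chi0 a2 f).
Proof.
apply/ffunP => S; case: (setI2_cases S) => [->|[->|[->|->]]];
  rewrite !chi0E_coords ?kd_set0 ?kd_th1 ?kd_th2 ?kd_th12 !chi0E_coords /=.
- apply: (eq_by_comb (D := (f th2 * s2 - f th1 * s2) * (2 * h - 1))).
    by rewrite /tt /ys /xs /mfactor /s1 /s2 /=; ring.
  by rewrite mul2_halfR subrr; ring.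
- apply: (eq_by_comb (D := - f th12 * s2 * (2 * h - 1) + f set0 *
    (w1 * (h * (x1 + y1)) - w2 * (h * (x2 + y2)) + s2 * a2 - u1 * mfactor))).
    by rewrite /tt /ys /xs /mfactor /s1 /s2 /=; ring.
  by rewrite mul2_halfR subrr chain_rel_th1; ring.
- apply: (eq_by_comb (D := f set0 * (w2 - w1 - s1 * a2 - u2 * mfactor))).
    by rewrite /tt /ys /xs /mfactor /s1 /s2 /=; ring.
  by rewrite chain_rel_th2; ring.
- apply: (eq_by_comb (D :=
    f th1 * ((y1 - x1) * a2 - w2 + u1 + u2 * (h * (x1 + y1)))
    + f th2 * ((y2 - x2) * a2 + w1 - u1 - u2 * (h * (x2 + y2))))).
    by rewrite /tt /ys /xs /mfactor /s1 /s2 /=; ring.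
  by rewrite chain_rel_th12_1 chain_rel_th12_2; ring.
Qed.

Hypotheses (hu1 : u1 \is n.+1.-homog) (hu2 : u2 \is n.-homog).

Lemma a2_homog : a2 \is n.-homog.
Proof.
have hq : x1 - y1 \is 1.-homog by apply: rpredB; apply: var_homog.
have hau : a2 - h * u2 \is n.-homog.
  apply: (@dhomogMlK _ _ (x1 - y1) _ 1 _ _ hq); first by rewrite -opprB oppr_eq0 y1_sub_x1_neq0.
  rewrite ha; apply: rpredB; last exact: ww_homog.
  by apply: rpredD => //; apply: dhomogM (var_homog 2) hu2.
rewrite -[a2](subrK (h * u2)); apply: rpredD => //.
exact: dhomogM (mpolyC_homog _) hu2.
Qed.

End ChainIdentities.

Lemma chi0D a2 f g : chi0 a2 (f + g) = chi0 a2 f + chi0 a2 g.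
Proof. by apply/ffunP => S; rewrite !ffunE !chi0E !ffunE; ring. Qed.

Lemma chi0Z a2 r f : chi0 a2 (sc r f) = sc r (chi0 a2 f).
Proof. by apply/ffunP => S; rewrite !ffunE !chi0E !ffunE; ring. Qed.

Lemma chi0_parity a2 f e : parity_in f e -> parity_in (chi0 a2 f) e.
Proof.
move=> hf S; have := hf set0; have := hf th1; have := hf th2; have := hf th12.
rewrite !card_setI2 !inE /=.
case: e {hf} => z12 z2 z1 z0;
  [ have {}z0 := z0 isT; have {}z12 := z12 isT
  | have {}z1 := z1 isT; have {}z2 := z2 isT ];
  case: (setI2_cases S) => [->|[->|[->|->]]]; rewrite ?cards0 ?card_setI2 ?inE //= => _;
  rewrite !chi0E_coords ?z0 ?z1 ?z2 ?z12; ring.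
Qed.

Lemma chi0_homog n u1 u2 a2 f j : a2 \is n.-homog ->
  homog_in (Xcirc n.+1) 0 f j -> homog_in (Xbullet n.+1 u1 u2) (-2) (chi0 a2 f) j.
Proof.
move=> /qhomog_dhomog qa hf S.
have := hf set0; have := hf th1; have := hf th2; have := hf th12.
rewrite !kdegE /= => q12 q2 q1 q0.
case: (setI2_cases S) => [->|[->|[->|->]]]; rewrite !chi0E_coords !kdegE /=.
- by apply: qhomog_eq (qhomogM q0 qhomog_mfactor) _; lia.
- apply: qhomogD.
    by apply: qhomog_eq (qhomogM q1 (qhomog_half_add 0 2)) _; lia.
  by apply/qhomogN/(qhomog_eq (qhomogM q2 (qhomog_half_add 1 3))); lia.
- by apply: qhomogD; [apply/qhomogN/(qhomog_eq q1) | apply: qhomog_eq q2 _]; lia.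
- by apply: qhomogD; [apply: qhomog_eq (qhomogM q0 qa) _ | apply: qhomog_eq q12 _]; lia.
Qed.

Lemma mfactor_ideal p :
  in_ideal2 (tt ord0) (tt ord_max) p -> in_ideal2 s1 s2 (mfactor * p).
Proof.
move=> [r1 [r2 ->]].
exists (r1 * (halfR * (x1 + y1)) - r2 * (halfR * (x2 + y2))), (- r1 + r2).
apply: (eq_by_comb (D := (r2 * s2 - r1 * s2) * (2 * halfR - 1))).
  by rewrite /tt /ys /xs /mfactor /s1 /s2 /=; ring.
by rewrite mul2_halfR subrr; ring.
Qed.

Theorem lemmaA6 (N : nat) (u1 u2 a2 : R) :
  (0 < N)%N ->
  u1 \is N.-homog -> u2 \is N.-1.-homog ->
  y1 ^+ N.+1 + y2 ^+ N.+1 - x1 ^+ N.+1 - x2 ^+ N.+1 = u1 * s1 + u2 * s2 ->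
  swapxy u1 = u1 -> swapxy u2 = u2 ->
  (x1 - y1) * (a2 - halfR * u2) = u1 + y1 * u2 - ww N ord_max ->
  mf_morphism (Xcirc N) (Xbullet N u1 u2) (-2) (chi0 a2) /\
  (forall p : R, in_ideal2 (tt ord0) (tt ord_max) p -> in_ideal2 s1 s2 (mfactor * p)) /\
  (forall f : ext, in_ideal2 s1 s2 (chi0 a2 f set0 - mfactor * f set0)).
Proof.
case: N => // n _ hu1 hu2 hsum _ _ ha.
have ha2 := a2_homog ha hu1 hu2.
split; last split.
- split; [exact: chi0D | exact: chi0Z | exact: chi0_parity | | exact: chi0_kd].
  by move=> f j; apply: chi0_homog.
- exact: mfactor_ideal.
- by move=> f; exists 0, 0; rewrite chi0_set0 mulrC subrr; ring.
Qed.
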